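(* Let $\mathbb{F}_q$ be any finite field, $S\subseteq\mathbb{F}_q\setminus\{0\}$ any symmetric set, $G=\Gamma(\mathbb{F}_q,S)$, and $\overline{G}=\Gamma(\mathbb{F}_q,\overline S)$ its complement, where $\overline S=(\mathbb{F}_q\setminus\{0\})\setminus S$. Define $\rho_{\mathrm{lin}}(G)=q^{1-\frac{|S|}{q-1}}$ and $\rho_{\mathrm{lin}}(\overline G)=q^{1-\frac{|\overline S|}{q-1}}$. Then exactly one of the following holds: (a) $\rho_{\mathrm{lin}}(G)=\vartheta(G)$ and $\rho_{\mathrm{lin}}(\overline{G})=\vartheta(\overline{G})$; (b) for one of the graphs $H\in\{G,\overline G\}$, $\rho_{\mathrm{lin}}(H)<\vartheta(H)$.
   Context: For a symmetric set $S\subseteq\mathbb{F}_q\setminus\{0\}$ ($S=-S$), the Cayley graph $\Gamma(\mathbb{F}_q,S)$ has vertex set $\mathbb{F}_q$, with $u\sim v$ iff $u-v\in S$. $\vartheta(\cdot)$ denotes the Lovász theta function of a graph. The quantity $\rho_{\mathrm{lin}}(\Gamma(\mathbb{F}_q,S))=q^{1-|S|/(q-1)}$ is an upper bound on the linear Shannon capacity $\Theta_{\mathrm{lin}}(\Gamma(\mathbb{F}_q,S))=\sup_k\alpha_{\mathrm{lin}}(G^k)^{1/k}$, where $\alpha_{\mathrm{lin}}(G^k)$ is the largest size of an independent set in the $k$-fold strong product $G^k$ that is a linear subspace of $\mathbb{F}_q^k$. *)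

From HB Require Import structures.
From mathcomp Require Import all_boot all_order all_algebra all_field.
From mathcomp Require Import boolp classical_sets reals exp.
Set Implicit Arguments. Unset Strict Implicit. Unset Printing Implicit Defensive.
Import Order.TTheory GRing.Theory Num.Theory.
Local Open Scope ring_scope.
Local Open Scope classical_set_scope.

Definition psd_sym (R : realType) (V : finType) (B : V -> V -> R) : Prop :=
  (forall u v, B u v = B v u) /\
  (forall x : V -> R, 0 <= \sum_(u : V) \sum_(v : V) x u * B u v * x v).

Definition theta_feasible (R : realType) (V : finType) (adj : rel V)
    (B : V -> V -> R) : Prop :=
  [/\ psd_sym B, \sum_(v : V) B v v = 1 &
      forall u v, u != v -> adj u v -> B u v = 0].

Definition lovasz_theta (R : realType) (V : finType) (adj : rel V) : R :=
  sup [set t : R | exists B : V -> V -> R,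
         theta_feasible adj B /\ t = \sum_(u : V) \sum_(v : V) B u v].

Definition cayley (F : finFieldType) (S : {set F}) : rel F :=
  fun u v => (u - v) \in S.

Definition compl_conn (F : finFieldType) (S : {set F}) : {set F} :=
  [set x : F | (x != 0) && (x \notin S)].

Definition rho_lin (R : realType) (F : finFieldType) (S : {set F}) : R :=
  powR (#|F|%:R) (1 - #|S|%:R / (#|F| - 1)%:R).

From HB Require Import structures.
From mathcomp Require Import all_boot all_order all_algebra all_field.
From mathcomp Require Import boolp classical_sets reals exp.
From mathcomp Require Import ring lra.
Import Order.TTheory GRing.Theory Num.Theory.
Local Open Scope ring_scope.
Set Implicit Arguments. Unset Strict Implicit. Unset Printing Implicit Defensive.

(* For G = Cayley(F_q, S) and its complement Gbar = Cayley(F_q, Sbar) the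
   exponents of rho_lin(G) = q^(1 - |S|/(q-1)) and rho_lin(Gbar) add up to 1,
   so rho_lin(G) rho_lin(Gbar) = q, whereas Lovasz's product inequality gives
   theta(G) theta(Gbar) >= q.  Hence rho_lin cannot be >= theta on both graphs
   with one inequality strict: either both are equalities, or rho_lin < theta
   on one of the graphs, and these two cases exclude each other.

   The substance is the product inequality theta(G) theta(G') >= n (when the
   edges of G' are non-edges of G), derived from the primal definition of
   theta. *)

Section Matrices.
Variables (R : realType) (V : finType).
Implicit Types (B : V -> V -> R) (x y : V -> R).
Local Notation n := (#|V|%:R : R).

Lemma sum_const (c : R) : \sum_(v : V) c = c * n.
Proof. by rewrite sumr_const mulr_natr. Qed.

Definition dsum (f : V -> V -> R) : R := \sum_(u : V) \sum_(v : V) f u v.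

Lemma dsum_lin (f g h : V -> V -> R) (a b : R) :
  (forall u v, f u v = a * g u v + b * h u v) -> dsum f = a * dsum g + b * dsum h.
Proof.
move=> E; rewrite /dsum !mulr_sumr -big_split; apply: eq_bigr => u _.
by rewrite !mulr_sumr -big_split; apply: eq_bigr => v _; rewrite E.
Qed.

Lemma dsum_lin3 (f g h k : V -> V -> R) (a b c : R) :
  (forall u v, f u v = a * g u v + b * h u v + c * k u v) ->
  dsum f = a * dsum g + b * dsum h + c * dsum k.
Proof.
move=> E; rewrite /dsum !mulr_sumr -!big_split; apply: eq_bigr => u _.
by rewrite !mulr_sumr -!big_split; apply: eq_bigr => v _; rewrite E.
Qed.

Lemma dsum_scale (f g : V -> V -> R) (a : R) :
  (forall u v, f u v = a * g u v) -> dsum f = a * dsum g.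
Proof. by move=> E; rewrite (@dsum_lin _ g g a 0) ?mul0r ?addr0 // => u v; rewrite E mul0r addr0. Qed.

Lemma ler_dsum (f g : V -> V -> R) : (forall u v, f u v <= g u v) -> dsum f <= dsum g.
Proof. by move=> fg; apply: ler_sum => u _; apply: ler_sum => v _; exact: fg. Qed.

Lemma dsum_ge_entry (f : V -> V -> R) u v :
  (forall a b, 0 <= f a b) -> f u v <= dsum f.
Proof.
move=> f0; rewrite /dsum (bigD1 u) //= (bigD1 v) //= -addrA lerDl.
by apply: addr_ge0; apply: sumr_ge0 => a _ //; apply: sumr_ge0.
Qed.

Lemma dsum_prod x y : dsum (fun u v => x u * y v) = (\sum_u x u) * \sum_v y v.
Proof. by rewrite /dsum mulr_suml; apply: eq_bigr => u _; rewrite mulr_sumr. Qed.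

Lemma dsum_const (c : R) : dsum (fun _ _ => c) = c * n ^+ 2.
Proof.
rewrite (@dsum_scale _ (fun _ _ => 1 * 1) c); last by move=> u v; rewrite !mulr1.
by rewrite dsum_prod !sum_const mul1r expr2.
Qed.

Lemma dsum_avg x : dsum (fun u v => (x u + x v) / 2) = n * \sum_v x v.
Proof.
rewrite (@dsum_lin _ (fun u v => x u * 1) (fun u v => 1 * x v) 2^-1 2^-1); last first.
  by move=> u v; ring.
by rewrite !dsum_prod !sum_const; field.
Qed.

Lemma dsum_diag (f : V -> V -> R) :
  dsum (fun u v => (u == v)%:R * f u v) = \sum_(v : V) f v v.
Proof.
apply: eq_bigr => u _; rewrite (bigD1 u) //= eqxx mul1r big1 ?addr0 // => v.
by rewrite eq_sym => /negbTE ->; rewrite mul0r.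
Qed.

Definition qform B x : R := dsum (fun u v => x u * B u v * x v).
Definition trc B : R := \sum_(v : V) B v v.
Definition idm (c : R) : V -> V -> R := fun u v => (u == v)%:R * c.

Lemma qform_lin B B1 B2 (a b : R) x :
  (forall u v, B u v = a * B1 u v + b * B2 u v) ->
  qform B x = a * qform B1 x + b * qform B2 x.
Proof. by move=> E; apply: dsum_lin => u v; rewrite E; ring. Qed.

Lemma qform_idm c x : qform (idm c) x = c * \sum_(u : V) x u ^+ 2.
Proof.
rewrite /qform (@dsum_lin _ (fun u v => (u == v)%:R * (x u * x v)) (fun _ _ => 0) c 0).
  by rewrite dsum_diag mulr_sumr; under eq_bigr do rewrite expr2; ring.
by move=> u v; rewrite /idm; ring.
Qed.

Lemma dsum_idm c : dsum (idm c) = c * n.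
Proof. by rewrite dsum_diag sum_const. Qed.

Lemma trc_idm c : trc (idm c) = c * n.
Proof. by rewrite /trc /idm (eq_bigr (fun _ => c)) ?sum_const // => u; rewrite eqxx mul1r. Qed.

Lemma qform_rank1 x y : qform (fun u v => y u * y v) x = (\sum_u x u * y u) ^+ 2.
Proof. by rewrite /qform expr2 -dsum_prod; apply: eq_bigr => u _; apply: eq_bigr => v _; ring. Qed.

Lemma dsum_qform B : dsum B = qform B (fun _ => 1).
Proof. by apply: eq_bigr => u _; apply: eq_bigr => v _; rewrite mul1r mulr1. Qed.

End Matrices.

Section Psd.
Variables (R : realType) (V : finType).
Implicit Types (A B : V -> V -> R) (x : V -> R).
Local Notation n := (#|V|%:R : R).

Lemma psd_qform B x : psd_sym B -> 0 <= qform B x.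
Proof. by case=> _; apply. Qed.

Lemma psd_comb B B1 B2 (a b : R) : 0 <= a -> 0 <= b ->
  (forall u v, B u v = a * B1 u v + b * B2 u v) ->
  psd_sym B1 -> psd_sym B2 -> psd_sym B.
Proof.
move=> a0 b0 E [S1 P1] [S2 P2]; split=> [u v|x]; first by rewrite !E S1 S2.
change (0 <= qform B x); rewrite (qform_lin x E).
by apply: addr_ge0; apply: mulr_ge0 => //; [exact: P1 | exact: P2].
Qed.

Lemma psd_scale B (a : R) : 0 <= a -> psd_sym B -> psd_sym (fun u v => a * B u v).
Proof.
move=> a0 PB; apply: (psd_comb (b := 0) a0 (lexx 0) _ PB PB) => u v.
by rewrite mul0r addr0.
Qed.

Lemma psd_idm (c : R) : 0 <= c -> psd_sym (idm c : V -> V -> R).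
Proof.
move=> c0; split=> [u v|x]; first by rewrite /idm eq_sym.
by change (0 <= qform (idm c) x); rewrite qform_idm mulr_ge0 // sumr_ge0 // => u _; exact: sqr_ge0.
Qed.

Lemma qform_ones x : qform (fun _ _ => 1) x = (\sum_u x u) ^+ 2.
Proof.
have -> : \sum_u x u = \sum_u x u * 1 by apply: eq_bigr => u _; rewrite mulr1.
rewrite -qform_rank1; apply: eq_bigr => u _; apply: eq_bigr => v _.
by rewrite !mulr1.
Qed.

Lemma psd_ones : psd_sym (fun _ _ : V => 1 : R).
Proof. by split=> // x; change (0 <= qform (fun _ _ => 1) x); rewrite qform_ones sqr_ge0. Qed.

(* Evaluating a quadratic form on a combination of two basis vectors gives
   the 2 x 2 principal minors, whence the classical entry bounds. *)
Definition delta (u : V) : V -> R := fun w => (w == u)%:R.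

Lemma sum_delta (u : V) (f : V -> R) : \sum_(w : V) f w * delta u w = f u.
Proof.
rewrite (bigD1 u) //= /delta eqxx mulr1 big1 ?addr0 // => w /negbTE ->.
by rewrite mulr0.
Qed.

Lemma sum_delta2 (u v : V) (a b : R) (f : V -> R) :
  \sum_(w : V) f w * (a * delta u w + b * delta v w) = a * f u + b * f v.
Proof.
under eq_bigr do rewrite mulrDr mulrCA [f _ * (b * _)]mulrCA.
by rewrite big_split /= -!mulr_sumr !sum_delta.
Qed.

Lemma qform_delta2 B (u v : V) (a b : R) :
  qform B (fun w => a * delta u w + b * delta v w) =
  a ^+ 2 * B u u + a * b * (B u v + B v u) + b ^+ 2 * B v v.
Proof.
rewrite /qform /dsum.
under eq_bigr => w _ do
  rewrite (sum_delta2 u v a b (fun z => (a * delta u w + b * delta v w) * B w z)).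
rewrite (eq_bigr (fun w => (a * B w u + b * B w v) * (a * delta u w + b * delta v w))).
  by rewrite sum_delta2; ring.
by move=> w _; ring.
Qed.

Lemma psd_diag B u : psd_sym B -> 0 <= B u u.
Proof.
move=> PB; have := psd_qform (fun w => 1 * delta u w + 0 * delta u w) PB.
by rewrite qform_delta2; lra.
Qed.

Lemma psd_offdiag B u v : psd_sym B -> 2 * `|B u v| <= B u u + B v v.
Proof.
move=> PB; have := psd_qform (fun w => 1 * delta u w + 1 * delta v w) PB.
have := psd_qform (fun w => 1 * delta u w + (-1) * delta v w) PB.
rewrite !qform_delta2 (PB.1 v u).
by case: (ler0P (B u v)) => _; lra.
Qed.

Lemma psd_dsum B : psd_sym B -> dsum B <= n * trc B.
Proof.
move=> PB; rewrite /trc -dsum_avg; apply: ler_dsum => u v.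
by have := psd_offdiag u v PB; have := ler_norm (B u v); lra.
Qed.

Definition spectraplex B : Prop := psd_sym B /\ trc B = 1.

Lemma spectraplex_seg B1 B2 (e : R) : 0 <= e <= 1 ->
  spectraplex B1 -> spectraplex B2 ->
  spectraplex (fun u v => B1 u v + e * (B2 u v - B1 u v)).
Proof.
move=> /andP[e0 e1] [P1 T1] [P2 T2]; split.
  by apply: (psd_comb (a := 1 - e) (b := e) _ _ _ P1 P2) => [||u v]; [lra | lra | ring].
rewrite /trc (eq_bigr (fun v => (1 - e) * B1 v v + e * B2 v v)); last by move=> v _; ring.
by rewrite big_split /= -!mulr_sumr -/(trc B1) -/(trc B2) T1 T2; ring.
Qed.

Lemma spectraplex_entry B u v : spectraplex B -> `|B u v| <= 1.
Proof.
move=> [PB TB].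
have diag w : B w w <= 1.
  rewrite -TB /trc (bigD1 w) //= lerDl.
  by apply: sumr_ge0 => a _; exact: psd_diag.
by have := psd_offdiag u v PB; have := diag u; have := diag v; lra.
Qed.

Lemma spectraplex_dsum B : spectraplex B -> 0 <= dsum B <= n.
Proof.
move=> [PB TB]; rewrite dsum_qform psd_qform //=.
by have := psd_dsum PB; rewrite TB mulr1 dsum_qform.
Qed.

Lemma spectraplex_idm : (0 < #|V|)%N -> spectraplex (idm (n^-1) : V -> V -> R).
Proof.
move=> Vn; have n0 : 0 < n by rewrite ltr0n.
split; first by apply: psd_idm; rewrite invr_ge0 ltW.
by rewrite trc_idm mulVf // gt_eqF.
Qed.

(* A symmetric matrix pairing nonnegatively with every density matrix is PSD:
   test the pairing on the rank-one density matrix x x^T / |x|^2. *)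
Lemma psd_of_pairing A : (forall u v, A u v = A v u) ->
  (forall B, spectraplex B -> 0 <= dsum (fun u v => A u v * B u v)) -> psd_sym A.
Proof.
move=> SA pos; split=> // x; rewrite -/(qform A x).
set s := \sum_(u : V) x u ^+ 2.
have s0 : 0 <= s by apply: sumr_ge0 => u _; exact: sqr_ge0.
have [sz|snz] := eqVneq s 0.
  have x0 u : x u = 0.
    apply/eqP; rewrite -sqrf_eq0; apply/eqP.
    by move/psumr_eq0P: sz; apply => // w _; exact: sqr_ge0.
  by rewrite /qform /dsum big1 // => u _; rewrite big1 // => v _; rewrite x0 !mul0r.
have s_pos : 0 < s by rewrite lt_def snz s0.
set Bx := fun u v => s^-1 * (x u * x v).
have TBx : spectraplex Bx.
  split; last by rewrite /trc -mulr_sumr (eq_bigr _ (fun u _ => esym (expr2 (x u)))) mulVf.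
  apply: psd_scale; first by rewrite invr_ge0.
  split=> [u v|y]; first by rewrite mulrC.
  by change (0 <= qform (fun u v => x u * x v) y); rewrite qform_rank1 sqr_ge0.
have := pos _ TBx; rewrite (@dsum_scale R V _ (fun u v => x u * A u v * x v) s^-1).
  by rewrite pmulr_rge0 // invr_gt0.
by move=> u v; rewrite /Bx; ring.
Qed.

End Psd.

(* This replaces the existence of an exact minimiser (compactness). *)
Section NearMinimiser.
Variables (R : realType) (X : Type) (T : X -> Prop) (h : X -> R).
Variables (seg : X -> X -> R -> X) (L Q : X -> X -> R) (K : R).
Hypothesis T_seg : forall P B e, 0 <= e <= 1 -> T P -> T B -> T (seg P B e).
Hypothesis h_seg :
  forall P B e, h (seg P B e) = h P + 2 * e * L P B + e ^+ 2 * Q P B.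
Hypothesis Q_le : forall P B, T P -> T B -> Q P B <= K.
Hypothesis K_gt0 : 0 < K.
Hypothesis h_ge0 : forall B, T B -> 0 <= h B.
Hypothesis T_inhabited : exists B, T B.

Lemma near_min_stationary (del : R) : 0 < del ->
  exists2 P, T P & forall B, T B -> - del <= L P B.
Proof.
move=> d0; set eps := del / (K + del).
have Kd0 : 0 < K + del by rewrite addr_gt0.
have e0 : 0 < eps by rewrite divr_gt0.
have e1 : eps <= 1 by rewrite ler_pdivrMr // mul1r lerDr ltW.
have epsK : eps * K <= del.
  by rewrite mulrAC ler_pdivrMr // ler_pM2l // lerDl ltW.
set values := [set t : R | exists2 B, T B & t = - h B]%classic.
have values_sup : has_sup values.
  split; first by case: T_inhabited => B TB; exists (- h B); exists B.
  by exists 0 => t [B TB ->]; rewrite oppr_le0 h_ge0.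
have [_ [P TP ->] P_near] := sup_adherent (mulr_gt0 e0 d0) values_sup.
exists P => // B TB.
have e01 : 0 <= eps <= 1 by rewrite (ltW e0) e1.
have : - h (seg P B eps) <= sup values.
  by apply: sup_upper_bound values_sup _ _; exists (seg P B eps); [exact: T_seg|].
rewrite h_seg => seg_le.
have slope : 0 < eps * (2 * L P B + eps * Q P B + del) by nra.
have epsQ : eps * Q P B <= eps * K by rewrite ler_pM2l // Q_le.
by move: slope; rewrite pmulr_rgt0 //; lra.
Qed.

End NearMinimiser.

Section Theta.
Variables (R : realType) (V : finType) (adj : rel V).
Hypothesis V_gt0 : (0 < #|V|)%N.
Implicit Types (B : V -> V -> R).
Local Notation n := (#|V|%:R : R).

Definition edge (u v : V) : bool := (u != v) && (adj u v || adj v u).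

Lemma edge_sym u v : edge u v = edge v u.
Proof. by rewrite /edge eq_sym orbC. Qed.

Lemma edge_irr u : edge u u = false.
Proof. by rewrite /edge eqxx. Qed.

Definition theta_values : set R :=
  [set t | exists B, theta_feasible adj B /\ t = dsum B]%classic.

Lemma n_gt0 : 0 < n.
Proof. by rewrite ltr0n. Qed.

(* The scalar matrix I/n is feasible, so the supremum defining theta is that
   of a nonempty set bounded by n, and theta is at least 1. *)
Lemma theta_feasible_idm : theta_feasible adj (idm (n^-1)).
Proof.
have [PI TrI] := spectraplex_idm R V_gt0.
by split=> // u v /negbTE uv _; rewrite /idm uv mul0r.
Qed.

Lemma theta_values_sup : has_sup theta_values.
Proof.
split.
  by exists (dsum (idm (n^-1) : V -> V -> R)), (idm (n^-1)); split=> //; exact: theta_feasible_idm.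
exists n => t [B [[PB TB _] ->]].
by have /andP[] := @spectraplex_dsum R V B (conj PB TB).
Qed.

Lemma theta_ub B : theta_feasible adj B -> dsum B <= lovasz_theta R adj.
Proof. by move=> FB; apply: sup_upper_bound theta_values_sup _ _; exists B. Qed.

Lemma theta_ge1 : 1 <= lovasz_theta R adj.
Proof.
have := theta_ub theta_feasible_idm.
by rewrite dsum_idm mulVf // gt_eqF // n_gt0.
Qed.

End Theta.

(* If every edge of adj' is a non-edge of adj, a PSD matrix M with diagonal
   lam - 1 and entries -1 on the non-edges of adj certifies theta(adj') >= n/lam:
   the matrix (J + M) / (n lam) is feasible for theta(adj'). *)
Section CertificateBound.
Variables (R : realType) (V : finType) (adj adj' : rel V).
Hypothesis V_gt0 : (0 < #|V|)%N.
Hypothesis adj'_nonedge : forall u v, u != v -> adj' u v -> ~~ edge adj u v.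
Local Notation n := (#|V|%:R : R).

Lemma theta_certificate_lb (lam : R) (M : V -> V -> R) : 0 < lam ->
  psd_sym M -> (forall u, M u u = lam - 1) ->
  (forall u v, u != v -> ~~ edge adj u v -> M u v = -1) ->
  n / lam <= lovasz_theta R adj'.
Proof.
move=> lam0 PM Mdiag Moff; have n0 := n_gt0 R V_gt0.
set k := (n * lam)^-1.
have k0 : 0 < k by rewrite invr_gt0 mulr_gt0.
set C := fun u v => k * 1 + k * M u v.
have FC : theta_feasible adj' C.
  split.
  - exact: (psd_comb (ltW k0) (ltW k0) _ (@psd_ones R V) PM).
  - rewrite (eq_bigr (fun _ => k * lam)); last by move=> u _; rewrite /C Mdiag; ring.
    by rewrite sum_const /k; field; rewrite !gt_eqF.
  - by move=> u v uv a; rewrite /C Moff ?adj'_nonedge // mulr1 mulrN1 addrN.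
apply: (le_trans _ (theta_ub V_gt0 FC)).
rewrite /C (@dsum_lin R V _ (fun _ _ => 1) M k k) // dsum_const mul1r.
have M0 : 0 <= dsum M by rewrite dsum_qform psd_qform.
have -> : n / lam = k * n ^+ 2 by rewrite /k invfM expr2; field; rewrite !gt_eqF.
by rewrite lerDl mulr_ge0 // ltW.
Qed.

End CertificateBound.

(* For lam > theta, the penalty
     h(B) = sum_{uv edge} B_uv^2 + (sum B - lam)^2
   is bounded away from 0 on density matrices; a near-minimiser P of h is nearly
   stationary, and the stationarity inequality says that the symmetric matrix
   P restricted to the edges + r J - r lam I  (r = sum P - lam < 0) pairs
   positively with every density matrix, hence is PSD.  Rescaled by -1/r it is
   the certificate required by theta_certificate_lb. *)
Section Duality.
Variables (R : realType) (V : finType) (adj : rel V).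
Hypothesis V_gt0 : (0 < #|V|)%N.
Implicit Types (B P : V -> V -> R) (x : V -> R).
Local Notation n := (#|V|%:R : R).
Local Notation theta := (lovasz_theta R adj).
Local Notation edge := (edge adj).

Definition edge_part B : V -> V -> R := fun u v => (edge u v)%:R * B u v.

Lemma mul_le_avg (a b c eta : R) :
  `|c| <= eta -> a * c * b <= eta * ((a ^+ 2 + b ^+ 2) / 2).
Proof.
move=> c_eta.
have abs_ab : `|a| * `|b| <= (a ^+ 2 + b ^+ 2) / 2.
  rewrite -(real_normK (num_real a)) -(real_normK (num_real b)).
  by have := sqr_ge0 (`|a| - `|b|); lra.
apply: le_trans (ler_norm _) _; rewrite !normrM mulrAC.
apply: le_trans (ler_wpM2l (mulr_ge0 (normr_ge0 a) (normr_ge0 b)) c_eta) _.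
by rewrite mulrC ler_wpM2l // (le_trans (normr_ge0 c)).
Qed.

Lemma qform_edge_part_le B x (eta : R) :
  (forall u v, edge u v -> `|B u v| <= eta) -> 0 <= eta ->
  qform (edge_part B) x <= eta * n * \sum_u x u ^+ 2.
Proof.
move=> small eta0; rewrite -mulrA -dsum_avg.
rewrite -(@dsum_scale R V (fun u v => eta * ((x u ^+ 2 + x v ^+ 2) / 2))) //.
apply: ler_dsum => u v; apply: mul_le_avg; rewrite /edge_part.
by case: (boolP (edge u v)) => e; rewrite ?mul1r ?small // mul0r normr0.
Qed.

(* A density matrix that is eta-close to vanishing on the edges has total sum
   at most theta (1 + eta n^2): adding eta n I and removing its edge part
   produces, after normalisation, a theta-feasible matrix. *)
Lemma dsum_le_near_feasible B (eta : R) : 0 <= eta -> spectraplex B ->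
  (forall u v, edge u v -> `|B u v| <= eta) ->
  dsum B <= theta * (1 + eta * n ^+ 2).
Proof.
move=> eta0 [PB TB] small; have n0 := n_gt0 R V_gt0.
set D := 1 + eta * n ^+ 2.
have D0 : 0 < D by rewrite ltr_pwDl // mulr_ge0 // sqr_ge0.
set B0 := fun u v => 1 * B u v + (-1) * edge_part B u v.
set B' := fun u v => D^-1 * B0 u v + D^-1 * idm (eta * n) u v.
have qB0 x : qform B0 x = qform B x - qform (edge_part B) x.
  by rewrite (@qform_lin R V B0 B (edge_part B) 1 (-1) x) //; ring.
have FB' : theta_feasible adj B'.
  split.
  - split=> [u v|x]; first by rewrite /B' /B0 /edge_part /idm PB.1 edge_sym eq_sym.
    change (0 <= qform B' x); rewrite (@qform_lin R V B' B0 (idm (eta * n)) D^-1 D^-1 x) //.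
    rewrite -mulrDr qB0 qform_idm pmulr_rge0 ?invr_gt0 //.
    by have := qform_edge_part_le x small eta0; have := psd_qform x PB; lra.
  - rewrite (eq_bigr (fun v => D^-1 * (B v v + eta * n))); last first.
      by move=> v _; rewrite /B' /B0 /edge_part /idm edge_irr eqxx /=; ring.
    rewrite -mulr_sumr big_split /= -/(trc B) TB sum_const.
    by rewrite -mulrA -expr2 -/D mulVf // gt_eqF.
  - move=> u v uv a; have e : edge u v by rewrite /edge uv a.
    by rewrite /B' /B0 /edge_part /idm e (negbTE uv) /=; ring.
have := theta_ub V_gt0 FB'.
rewrite (@dsum_lin R V B' B0 (idm (eta * n)) D^-1 D^-1) // -mulrDr dsum_idm.
rewrite (@dsum_lin R V B0 B (edge_part B) 1 (-1)) // => tB.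
have Eb : dsum (edge_part B) <= eta * n * n.
  by have := qform_edge_part_le (fun _ => 1) small eta0; rewrite -dsum_qform sum_const expr1n mul1r.
rewrite mulrC; apply: le_trans (ler_wpM2l (ltW D0) tB).
by rewrite mulrA mulfV ?gt_eqF // mul1r; lra.
Qed.

Definition penalty (lam : R) B : R :=
  dsum (fun u v => edge_part B u v * B u v) + (dsum B - lam) ^+ 2.

Lemma edge_sqr_ge0 B u v : 0 <= edge_part B u v * B u v.
Proof. by rewrite /edge_part -mulrA -expr2 mulr_ge0 ?ler0n ?sqr_ge0. Qed.

Lemma penalty_ge0 lam B : 0 <= penalty lam B.
Proof.
rewrite addr_ge0 ?sqr_ge0 //.
by apply: sumr_ge0 => u _; apply: sumr_ge0 => v _; exact: edge_sqr_ge0.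
Qed.

(* Above theta the penalty is bounded away from zero on density matrices: a
   small penalty forces small edge entries and a total sum close to lam, which
   dsum_le_near_feasible forbids. *)
Lemma penalty_pos (lam : R) : theta < lam ->
  exists2 kap, 0 < kap & forall B, spectraplex B -> kap <= penalty lam B.
Proof.
move=> lt_lam; have th1 := theta_ge1 R adj V_gt0; have n0 := n_gt0 R V_gt0.
have D0 : 0 < 2 * (1 + theta * n ^+ 2).
  by rewrite mulr_gt0 // ltr_pwDl // mulr_ge0 ?sqr_ge0 //; lra.
set eta := (lam - theta) / (2 * (1 + theta * n ^+ 2)).
have eta0 : 0 < eta by rewrite divr_gt0 //; lra.
have etaE : eta * (2 * (1 + theta * n ^+ 2)) = lam - theta by rewrite divfK ?gt_eqF.
exists (eta ^+ 2); first by rewrite exprn_gt0.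
move=> B TB; rewrite leNgt; apply/negP => small_pen.
have sqr_lt (y : R) : y ^+ 2 < eta ^+ 2 -> `|y| <= eta.
  move=> y_small; rewrite leNgt; apply/negP => big.
  by have := real_normK (num_real y); have := normr_ge0 y; nra.
have edge_small u v : edge u v -> `|B u v| <= eta.
  move=> e; apply: sqr_lt; apply: le_lt_trans small_pen.
  have := @dsum_ge_entry R V _ u v (edge_sqr_ge0 B).
  rewrite /edge_part e mul1r -expr2 => le; apply: le_trans le _.
  by rewrite lerDl sqr_ge0.
have near_lam : lam - eta <= dsum B.
  suff : `|dsum B - lam| <= eta by rewrite ler_distl => /andP[].
  apply: sqr_lt; apply: le_lt_trans small_pen; rewrite lerDr.
  by apply: sumr_ge0 => u _; apply: sumr_ge0 => v _; exact: edge_sqr_ge0.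
have := dsum_le_near_feasible (ltW eta0) TB edge_small.
have : eta * (1 + theta * n ^+ 2) < lam - theta by rewrite -etaE; nra.
by nra.
Qed.

Definition seg P B (e : R) : V -> V -> R := fun u v => P u v + e * (B u v - P u v).

Definition slope (lam : R) P B : R :=
  dsum (fun u v => edge_part P u v * (B u v - P u v))
  + (dsum P - lam) * (dsum B - dsum P).

Definition curvature P B : R :=
  dsum (fun u v => (edge u v)%:R * (B u v - P u v) ^+ 2) + (dsum B - dsum P) ^+ 2.

Lemma penalty_seg lam P B e : penalty lam (seg P B e) =
  penalty lam P + 2 * e * slope lam P B + e ^+ 2 * curvature P B.
Proof.
have sumE : dsum (seg P B e) = dsum P + e * (dsum B - dsum P).
  rewrite (@dsum_lin R V _ P B (1 - e) e) => [|u v]; last by rewrite /seg; ring.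
  by ring.
rewrite /penalty /slope /curvature sumE.
rewrite (@dsum_lin3 R V _ (fun u v => edge_part P u v * P u v)
  (fun u v => edge_part P u v * (B u v - P u v))
  (fun u v => (edge u v)%:R * (B u v - P u v) ^+ 2) 1 (2 * e) (e ^+ 2)).
  by ring.
by move=> u v; rewrite /seg /edge_part; ring.
Qed.

(* The curvature is bounded on density matrices, whose entries lie in [-1, 1]
   and whose entry sums lie in [0, n]. *)
Lemma curvature_le P B : spectraplex P -> spectraplex B ->
  curvature P B <= 5 * n ^+ 2.
Proof.
move=> TP TB.
have entries : dsum (fun u v => (edge u v)%:R * (B u v - P u v) ^+ 2) <= 4 * n ^+ 2.
  rewrite -dsum_const; apply: ler_dsum => u v.
  have := spectraplex_entry u v TP; have := spectraplex_entry u v TB.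
  rewrite !ler_norml => /andP[b1 b2] /andP[p1 p2].
  have d2 : (B u v - P u v) ^+ 2 <= 4 by nra.
  by case: (edge u v); rewrite ?mul1r ?mul0r //; lra.
have /andP[p0 pn] := spectraplex_dsum TP; have /andP[b0 bn] := spectraplex_dsum TB.
have : (dsum B - dsum P) ^+ 2 <= n ^+ 2 by nra.
by rewrite /curvature; lra.
Qed.

Definition dual_matrix (lam : R) P : V -> V -> R :=
  fun u v => edge_part P u v + (dsum P - lam) * 1
             + (- ((dsum P - lam) * lam)) * (u == v)%:R.

Lemma pairing_dual_matrix lam P B : trc B = 1 ->
  dsum (fun u v => dual_matrix lam P u v * B u v) = slope lam P B + penalty lam P.
Proof.
move=> TB.
rewrite (@dsum_lin3 R V _ (fun u v => edge_part P u v * B u v) B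
  (fun u v => (u == v)%:R * B u v) 1 (dsum P - lam) (- ((dsum P - lam) * lam))).
  rewrite dsum_diag -/(trc B) TB /slope /penalty.
  rewrite (@dsum_lin R V (fun u v => edge_part P u v * (B u v - P u v))
    (fun u v => edge_part P u v * B u v)
    (fun u v => edge_part P u v * P u v) 1 (-1)) => [|u v]; last by ring.
  by ring.
by move=> u v; rewrite /dual_matrix; ring.
Qed.

Lemma dual_certificate (lam : R) : theta < lam ->
  exists M : V -> V -> R, [/\ psd_sym M, forall u, M u u = lam - 1 &
     forall u v, u != v -> ~~ edge u v -> M u v = -1].
Proof.
move=> lt_lam; have th1 := theta_ge1 R adj V_gt0; have n0 := n_gt0 R V_gt0.
have [kap kap0 pen_ge] := penalty_pos lt_lam.
have [P TP stat] : exists2 P, spectraplex P &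
    forall B, spectraplex B -> - (kap / 2) <= slope lam P B.
  apply: (near_min_stationary (h := penalty lam) (seg := seg) (Q := curvature)
           (K := 5 * n ^+ 2)) => //.
  - by move=> P B e e01 TP TB; exact: spectraplex_seg.
  - exact: penalty_seg.
  - exact: curvature_le.
  - by rewrite mulr_gt0 // exprn_gt0.
  - by move=> B _; exact: penalty_ge0.
  - by exists (idm (n^-1)); exact: spectraplex_idm.
  - by rewrite divr_gt0.
set r := dsum P - lam; set A := dual_matrix lam P.
have pos B : spectraplex B -> kap / 2 <= dsum (fun u v => A u v * B u v).
  move=> TB; rewrite pairing_dual_matrix ?TB.2 //.
  by have := stat B TB; have := pen_ge P TP; lra.
have Adiag u : A u u = r - r * lam.
  by rewrite /A /dual_matrix /edge_part edge_irr eqxx /= -/r; ring.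
have r_neg : r < 0.
  have := pos _ (spectraplex_idm R V_gt0).
  rewrite (@dsum_scale R V _ (fun u v => (u == v)%:R * A u v) n^-1)
    => [|u v]; last by rewrite /idm; ring.
  rewrite dsum_diag (eq_bigr _ (fun u _ => Adiag u)) sum_const.
  rewrite (mulrC _ n) mulKf ?gt_eqF // => kap_le.
  have : 1 < lam by lra.
  by nra.
have PA : psd_sym A.
  apply: psd_of_pairing => [u v|B TB]; last by apply: le_trans (pos B TB); rewrite divr_ge0 ?ltW.
  by rewrite /A /dual_matrix /edge_part edge_sym (eq_sym u) (TP.1.1 u v).
exists (fun u v => (- r^-1) * A u v); split.
- by apply: psd_scale PA; rewrite oppr_ge0 invr_le0 ltW.
- by move=> u; rewrite Adiag; field; rewrite lt_eqF.
- move=> u v uv nuv.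
  rewrite /A /dual_matrix /edge_part (negbTE nuv) (negbTE uv) /= -/r.
  by field; rewrite lt_eqF.
Qed.

End Duality.

(* Otherwise pick lam strictly between theta(G) and n / theta(G'); the dual
   certificate for G at lam yields theta(G') >= n / lam > theta(G'). *)
Lemma theta_mul_ge (R : realType) (V : finType) (adj adj' : rel V) :
  (0 < #|V|)%N -> (forall u v, u != v -> adj' u v -> ~~ edge adj u v) ->
  #|V|%:R <= lovasz_theta R adj * lovasz_theta R adj'.
Proof.
move=> V_gt0 nonedge.
set t := lovasz_theta R adj; set t' := lovasz_theta R adj'; set n := (#|V|%:R : R).
have t1 : 1 <= t := theta_ge1 R adj V_gt0.
have t'1 : 1 <= t' := theta_ge1 R adj' V_gt0.
rewrite leNgt; apply/negP => small.
have t_lt : t < n / t' by rewrite ltr_pdivlMr //; lra.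
set lam := (t + n / t') / 2.
have t_lam : t < lam by rewrite /lam; lra.
have lam_lt : lam < n / t' by rewrite /lam; lra.
have lam0 : 0 < lam by lra.
have [M [PM Mdiag Moff]] := dual_certificate V_gt0 t_lam.
have := theta_certificate_lb V_gt0 nonedge lam0 PM Mdiag Moff.
rewrite -/n -/t' ler_pdivrMr // => n_le.
have cancel_t' : t' * (n / t') = n by field; rewrite gt_eqF //; lra.
have : t' * lam < t' * (n / t') by rewrite ltr_pM2l //; lra.
by rewrite cancel_t'; lra.
Qed.

Section CayleyComplement.
Variables (F : finFieldType) (S : {set F}).
Hypothesis S0 : 0 \notin S.
Hypothesis S_sym : forall x, x \in S -> - x \in S.

Lemma cayley_compl_nonedge u v :
  u != v -> cayley (compl_conn S) u v -> ~~ edge (cayley S) u v.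
Proof.
move=> uv; rewrite /cayley /compl_conn inE => /andP[_ uvS].
rewrite /edge uv /=; apply/negP => /orP[|vuS]; first by apply/negP.
by move: uvS; rewrite -opprB S_sym.
Qed.

Lemma card_compl_conn : (#|S| + #|compl_conn S|)%N = #|F|.-1.
Proof.
rewrite -(cardsC1 (0 : F)) -(cardsID S [set~ (0 : F)]).
have -> : [set~ (0 : F)] :&: S = S.
  apply/setP => x; rewrite !inE andbC.
  by case: (eqVneq x 0) => [->|]; rewrite ?(negbTE S0) ?andbT.
have -> // : [set~ (0 : F)] :\: S = compl_conn S.
by apply/setP => x; rewrite !inE andbC.
Qed.

Lemma card_field_gt1 : (1 < #|F|)%N.
Proof.
have := subset_leq_card (finset.subsetT [set (0 : F); 1]).
by rewrite cardsT cards2 eq_sym oner_neq0.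
Qed.

(* rho_lin(G) rho_lin(G bar) = q, as the two exponents sum to 1. *)
Lemma rho_lin_compl_mul (R : realType) :
  rho_lin R S * rho_lin R (compl_conn S) = #|F|%:R.
Proof.
have q1 := card_field_gt1.
rewrite /rho_lin -powRD; last by apply/implyP => _; rewrite pnatr_eq0 -lt0n ltnW.
have m0 : 0 < ((#|F| - 1)%N%:R : R) by rewrite ltr0n subn_gt0.
have sum_m : (#|S|%:R + #|compl_conn S|%:R : R) = (#|F| - 1)%N%:R.
  by rewrite -natrD card_compl_conn subn1.
have -> : 1 - #|S|%:R / (#|F| - 1)%N%:R + (1 - #|compl_conn S|%:R / (#|F| - 1)%N%:R) = 1 :> R.
  by rewrite -sum_m; field; rewrite sum_m gt_eqF.
by rewrite powRr1 // ler0n.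
Qed.

End CayleyComplement.

Lemma eq_or_lt_of_mul_le (R : realType) (r r' t t' : R) :
  0 < t -> 0 < t' -> r * r' <= t * t' ->
  let A := r = t /\ r' = t' in let B := r < t \/ r' < t' in
  (A /\ ~ B) \/ (~ A /\ B).
Proof.
move=> t0 t'0 le_mul /=.
have [lt|ge] := boolP ((r < t) || (r' < t')).
  right; split; last by case/orP: lt; [left | right].
  by case=> rt r't; move: lt; rewrite rt r't !ltxx.
move: ge; rewrite negb_or -!leNgt => /andP[tr t'r'].
have [rt r't] : r = t /\ r' = t'.
  by split; apply/eqP; rewrite eq_le ?tr ?t'r' andbT; nra.
by left; split=> //; rewrite rt r't !ltxx; case.
Qed.

Unset Implicit Arguments.

Theorem corollary1 (R : realType) (F : finFieldType) (S : {set F})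
    (hS0 : 0 \notin S) (hSsym : forall x : F, x \in S -> - x \in S) :
  let G := cayley S in
  let Gbar := cayley (compl_conn S) in
  let A := rho_lin R S = lovasz_theta R G /\
           rho_lin R (compl_conn S) = lovasz_theta R Gbar in
  let B := rho_lin R S < lovasz_theta R G \/
           rho_lin R (compl_conn S) < lovasz_theta R Gbar in
  (A /\ ~ B) \/ (~ A /\ B).
Proof.
have F_gt0 : (0 < #|F|)%N by apply/card_gt0P; exists 0.
have theta_pos (adj : rel F) : 0 < lovasz_theta R adj.
  by apply: lt_le_trans (theta_ge1 R adj F_gt0); exact: ltr01.
apply: eq_or_lt_of_mul_le; rewrite ?theta_pos //.
rewrite rho_lin_compl_mul //.
exact: (theta_mul_ge R F_gt0 (cayley_compl_nonedge hSsym)).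
Qed.
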